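(* The truncated cube (the convex polyhedron with $8$ triangular and $6$ octagonal faces obtained by truncating the vertices of a cube, in which every triangle is surrounded by three octagons and no two triangles share a vertex) has no facet path.
   Context: For a polyhedron, the (vertex-facet) incidence graph is the bipartite graph whose nodes are the faces (facets) and vertices of the polyhedron, with an arc $(v,f)$ whenever $v$ is a vertex of face $f$. A facet path is a trail $(v_0,f_1,v_1,f_2,\dots,f_k,v_k)$ in the incidence graph (no arc repeated) that contains every facet node exactly once; vertex nodes may repeat. *)

From mathcomp Require Import all_boot.
Set Implicit Arguments. Unset Strict Implicit. Unset Printing Implicit Defensive.

Section FacetPath.
Variables (V F : finType) (inc : V -> F -> bool).

(* A trail (v0, f1, v1, ..., fk, vk) in the bipartite incidence graph is
   represented by its start vertex v0 and the list [:: (f1,v1); ...; (fk,vk)]. *)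
Fixpoint is_walk (v : V) (s : seq (F * V)) : bool :=
  match s with
  | [::] => true
  | (f, w) :: s' => [&& inc v f, inc w f & is_walk w s']
  end.

Fixpoint trail_arcs (v : V) (s : seq (F * V)) : seq (V * F) :=
  match s with
  | [::] => [::]
  | (f, w) :: s' => (v, f) :: (w, f) :: trail_arcs w s'
  end.

Definition facet_path (v0 : V) (s : seq (F * V)) : bool :=
  [&& is_walk v0 s, uniq (trail_arcs v0 s) & perm_eq (map fst s) (enum F)].
End FacetPath.

(* Cube vertices are points of {0,1}^3.  A vertex of the truncated cube is a
   pair (c, i): the cut point near cube vertex c on the cube edge of direction i. *)
Definition tc_vertex := ({ffun 'I_3 -> bool} * 'I_3)%type.
(* Facets: inl c = triangle cutting off cube vertex c (8 of them);
           inr (j, b) = octagon coming from cube face {x | x_j = b} (6 of them). *)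
Definition tc_facet := ({ffun 'I_3 -> bool} + ('I_3 * bool))%type.

Definition tc_inc (x : tc_vertex) (f : tc_facet) : bool :=
  match f with
  | inl c => c == x.1
  | inr (j, b) => (j != x.2) && (x.1 j == b)
  end.

From mathcomp Require Import all_boot zify.

Set Implicit Arguments.
Unset Strict Implicit.
Unset Printing Implicit Defensive.

(* Consecutive facets of a walk share the vertex between them, and no vertex
   of the truncated cube lies on two triangles.  So along a facet path, which
   visits each facet once, no two triangles are consecutive; a sequence with
   no two consecutive triangles has at most one more triangle than octagons.
   But there are 8 triangles and only 6 octagons. *)

Definition not_both (T : Type) (a : pred T) : rel T := fun x y => ~~ (a x && a y).

Lemma path_not_both_count (T : Type) (a : pred T) (x : T) (s : seq T) :
  path (not_both a) x s -> count a (x :: s) <= count (predC a) (x :: s) + a x.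
Proof.
elim: s x => [|y s IH] x /=; first by case: (a x).
case/andP=> /negP xy_not_both /IH /=.
by case: (a x) (a y) xy_not_both => -[] //= _; lia.
Qed.

Lemma sorted_not_both_count (T : Type) (a : pred T) (s : seq T) :
  sorted (not_both a) s -> count a s <= count (predC a) s + 1.
Proof.
case: s => // x s path_s.
by apply: leq_trans (path_not_both_count path_s) _; rewrite leq_add2l leq_b1.
Qed.

Lemma count_perm_enum (T : finType) (a : pred T) (s : seq T) :
  perm_eq s (enum T) -> count a s = #|a|.
Proof.
move/permP->; rewrite cardE /enum_mem size_filter count_filter.
by apply: eq_count => x; rewrite /= andbT.
Qed.

Section SeparatedFacets.
Variables (V F : finType) (inc : V -> F -> bool) (special : pred F).
Hypothesis special_inc_inj :
  forall v f g, special f -> special g -> inc v f -> inc v g -> f = g.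

Lemma walk_facets_not_both (v : V) (s : seq (F * V)) :
  is_walk inc v s -> uniq (map fst s) -> sorted (not_both special) (map fst s).
Proof.
elim: s v => [|[f w] s IH] v //= /and3P[_ wf walk_s] /andP[f_notin uniq_s].
have := IH w walk_s uniq_s; case: s {IH} walk_s f_notin uniq_s => //= -[g u] s.
case/and3P=> wg _ _; rewrite inE negb_or => /andP[f_neq_g _] _ -> /[!andbT].
apply/negP=> /andP[sf sg]; move/eqP: f_neq_g; apply.
exact: special_inc_inj sf sg wf wg.
Qed.

Lemma facet_path_card_special (v0 : V) (s : seq (F * V)) :
  facet_path inc v0 s -> #|special| <= #|predC special| + 1.
Proof.
case/and3P=> walk_s _ perm_s.
have uniq_s : uniq (map fst s) by rewrite (perm_uniq perm_s) enum_uniq.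
rewrite -!(count_perm_enum _ perm_s).
by apply/sorted_not_both_count/(walk_facets_not_both walk_s).
Qed.

End SeparatedFacets.

Definition is_triangle (f : tc_facet) : bool := if f is inl _ then true else false.

Lemma tc_triangle_inc_inj (v : tc_vertex) (f g : tc_facet) :
  is_triangle f -> is_triangle g -> tc_inc v f -> tc_inc v g -> f = g.
Proof. by case: f g => [c|//] [c'|//] _ _ /= /eqP-> /eqP->. Qed.

Lemma card_triangles : #|is_triangle| = 8.
Proof.
transitivity #|codom (@inl {ffun 'I_3 -> bool} ('I_3 * bool))|.
  by apply: eq_card => f; apply/idP/codomP => [|[c ->]]; case: f => // c; exists c.
by rewrite card_codom ?card_ffun ?card_bool ?card_ord //; apply: inl_inj.
Qed.

Lemma card_octagons : #|predC is_triangle| = 6.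
Proof.
transitivity #|codom (@inr {ffun 'I_3 -> bool} ('I_3 * bool))|.
  by apply: eq_card => f; apply/idP/codomP => [|[o ->]]; case: f => // o; exists o.
by rewrite card_codom ?card_prod ?card_bool ?card_ord //; apply: inr_inj.
Qed.

Theorem mainTheorem10 :
  forall (v0 : tc_vertex) (s : seq (tc_facet * tc_vertex)),
    ~~ facet_path tc_inc v0 s.
Proof.
move=> v0 s; apply/negP => /(facet_path_card_special tc_triangle_inc_inj).
by rewrite card_triangles card_octagons.
Qed.
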